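(* Let $\mathfrak{g}_1,\dots,\mathfrak{g}_t$ be nilpotent Lie algebras. Then (1) $\mathfrak{g}_1\underline{\times}\mathfrak{g}_2\cong\mathfrak{g}_2\underline{\times}\mathfrak{g}_1$; and (2) $(\mathfrak{g}_1\underline{\times}\mathfrak{g}_2\underline{\times}\cdots\underline{\times}\mathfrak{g}_{t-1})\underline{\times}\mathfrak{g}_t\cong\mathfrak{g}_1\underline{\times}(\mathfrak{g}_2\underline{\times}\mathfrak{g}_3\underline{\times}\cdots\underline{\times}\mathfrak{g}_t)$, where an unparenthesized iterated product is formed from left to right, $\mathfrak{h}_1\underline{\times}\cdots\underline{\times}\mathfrak{h}_k=(\mathfrak{h}_1\underline{\times}\cdots\underline{\times}\mathfrak{h}_{k-1})\underline{\times}\mathfrak{h}_k$.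
   Context: All Lie algebras are finite-dimensional, complex, nilpotent and nonabelian; $C^1\mathfrak{g}=[\mathfrak{g},\mathfrak{g}]$. Product by generators: for $\mathfrak{g}_1,\mathfrak{g}_2$ of dimensions $m_1,m_2$ take bases $\{X_1,\dots,X_{m_1}\}$, $\{X'_1,\dots,X'_{m_2}\}$ such that $X_1,\dots,X_{n_1}$ generate $\mathfrak{g}_1$ and $X_{n_1+1},\dots,X_{m_1}$ span $C^1\mathfrak{g}_1$, and similarly for $\mathfrak{g}_2$ with $n_2$ generators. Then $\mathfrak{g}_1\underline{\times}\mathfrak{g}_2$ is the Lie algebra on $\mathfrak{g}_1\oplus\mathfrak{g}_2\oplus\langle Z_1,\dots,Z_{n_1n_2}\rangle$ with the brackets of $\mathfrak{g}_1$ and of $\mathfrak{g}_2$, $[X_i,X'_j]=Z_{(i-1)n_2+j}$ for $1\le i\le n_1$, $1\le j\le n_2$, $[X_i,X'_j]=0$ if $i>n_1$ or $j>n_2$, and the $Z_k$ central. In $\mathfrak{g}_1\underline{\times}\mathfrak{g}_2$ the generators $X_1,\dots,X_{n_1},X'_1,\dots,X'_{n_2}$ are used, the remaining basis vectors (including the $Z_k$) spanning its derived algebra. *)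

From HB Require Import structures.
From mathcomp Require Import all_boot all_order all_algebra.
From mathcomp Require Import reals complex.
Set Implicit Arguments. Unset Strict Implicit. Unset Printing Implicit Defensive.
Import Order.TTheory GRing.Theory Num.Theory.
Local Open Scope ring_scope.

(* A finite-dimensional Lie algebra over F, given in a fixed basis
   e_0, ..., e_{ldim-1} by structure constants: [e_i, e_j] = sum_k lc i j k e_k.
   [lgen] is the number of distinguished "generators": the basis vectors
   e_0, ..., e_{lgen-1} play the role of X_1..X_n, and e_lgen, ..., e_{ldim-1}
   are meant to span the derived algebra (see [adapted_basis]).
   Structure constants at indices >= ldim are ignored. *)
Record lie (F : fieldType) := Lie {
  ldim : nat;
  lgen : nat;
  lc : nat -> nat -> nat -> F }.

Section LieDefs.
Variable F : fieldType.
Implicit Types g h : lie F.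

Definition bracket g (u v : 'rV[F]_(ldim g)) : 'rV[F]_(ldim g) :=
  \row_(k < ldim g) \sum_(i < ldim g) \sum_(j < ldim g)
     u 0 i * v 0 j * lc g i j k.

Definition is_lie g : Prop :=
  (forall u : 'rV[F]_(ldim g), bracket u u = 0) /\
  (forall u v w : 'rV[F]_(ldim g), bracket u (bracket v w) + bracket v (bracket w u)
                   + bracket w (bracket u v) = 0).

(* C^k g is spanned by the k-fold brackets [x_1,[x_2,...,[x_k,x]...]];
   g is nilpotent iff C^k g = 0 for some k. *)
Definition nilpotent g : Prop :=
  exists k, forall (x : 'rV[F]_(ldim g)) (s : seq 'rV[F]_(ldim g)),
    size s = k -> foldr (@bracket g) x s = 0.

Definition nonabelian g : Prop := exists u v : 'rV[F]_(ldim g), bracket u v != 0.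

Definition basis_vec g (i : 'I_(ldim g)) : 'rV[F]_(ldim g) := delta_mx 0 i.

(* the last ldim - lgen basis vectors span C^1 g = [g, g]
   (and hence, g being nilpotent, the first lgen ones generate g) *)
Definition adapted_basis g : Prop :=
  (lgen g <= ldim g)%N /\
  (\sum_(i < ldim g) \sum_(j < ldim g) <<@bracket g (basis_vec i) (basis_vec j)>>
     == \sum_(k < ldim g | (lgen g <= k)%N) <<basis_vec k>>)%MS.

Definition good g : Prop :=
  [/\ is_lie g, nilpotent g, nonabelian g & adapted_basis g].

Definition lie_iso g h : Prop :=
  exists A : 'M[F]_(ldim g, ldim h),
    [/\ row_free A, row_full A &
        forall u v : 'rV[F]_(ldim g), bracket u v *m A = bracket (u *m A) (v *m A)].

(* New basis order:
     X_1..X_n1, X'_1..X'_n2, X_{n1+1}..X_m1, X'_{n2+1}..X'_m2, Z_1..Z_{n1 n2}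
   (0-based indices below); generators of the product are the first n1+n2. *)
Section Prod.
Variables g1 g2 : lie F.
Let m1 := ldim g1. Let n1 := lgen g1. Let m2 := ldim g2. Let n2 := lgen g2.
Let p := (m1 - n1)%N. Let q := (m2 - n2)%N.

Definition in1 (x : nat) : bool :=
  (x < n1)%N || ((n1 + n2 <= x)%N && (x < n1 + n2 + p)%N).
Definition inv1 (x : nat) : nat := if (x < n1)%N then x else (x - n2)%N.
Definition in2 (x : nat) : bool :=
  ((n1 <= x)%N && (x < n1 + n2)%N) ||
  ((n1 + n2 + p <= x)%N && (x < n1 + n2 + p + q)%N).
Definition inv2 (x : nat) : nat :=
  if (x < n1 + n2)%N then (x - n1)%N else (x - (n1 + n2 + p) + n2)%N.
(* index of Z_{(i-1) n2 + j} for 0-based i < n1, j < n2 *)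
Definition zidx (i j : nat) : nat := (n1 + n2 + p + q + i * n2 + j)%N.
Definition isgen1 (x : nat) : bool := (x < n1)%N.
Definition isgen2 (x : nat) : bool := (n1 <= x)%N && (x < n1 + n2)%N.

Definition prod_lc (x y k : nat) : F :=
  if [&& in1 x, in1 y & in1 k] then lc g1 (inv1 x) (inv1 y) (inv1 k)
  else if [&& in2 x, in2 y & in2 k] then lc g2 (inv2 x) (inv2 y) (inv2 k)
  else if [&& isgen1 x, isgen2 y & k == zidx x (y - n1)] then 1
  else if [&& isgen1 y, isgen2 x & k == zidx y (x - n1)] then -1
  else 0.

Definition lprod : lie F := Lie (m1 + m2 + n1 * n2) (n1 + n2) prod_lc.
End Prod.

Definition iprod (g : nat -> lie F) (a k : nat) : lie F :=
  foldl (fun acc i => lprod acc (g i)) (g a) (iota a.+1 k).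

End LieDefs.

From HB Require Import structures.
From mathcomp Require Import all_boot all_order all_algebra.
From mathcomp Require Import reals complex.
From mathcomp Require Import zify ring.
Set Implicit Arguments. Unset Strict Implicit. Unset Printing Implicit Defensive.
Import Order.TTheory GRing.Theory Num.Theory.

(* Both isomorphisms merely renumber the basis vectors, up to sign.  The
   structure constants of g1 x g2 only depend on whether an index is a basis
   vector of g1, of g2, or a Z, so we index the basis structurally.  Exchanging
   the factors sends Z_ij to -Z'_ji.  Indexed suitably, (A x B) x C and
   A x (B x C) have literally the same structure constants; as renumberings
   that respect generators are compatible with taking a further product,
   induction on t yields the iterated statement. *)

(* The basis of [lprod g1 g2], indexed structurally: [P1 a] is the a-th basis
   vector of g1, [P2 b] the b-th one of g2, and [PZ i j] is Z for the pair of
   generators (X_i, X'_j). *)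
Inductive pidx := P1 of nat | P2 of nat | PZ of nat & nat.

Section ProductIndex.
Variable F : fieldType.
Variables g1 g2 : lie F.
Local Notation m1 := (ldim g1). Local Notation n1 := (lgen g1).
Local Notation m2 := (ldim g2). Local Notation n2 := (lgen g2).
Hypothesis n1_le_m1 : n1 <= m1.
Hypothesis n2_le_m2 : n2 <= m2.

Definition pidx_enc (d : pidx) : nat :=
  match d with
  | P1 a => if a < n1 then a else a + n2
  | P2 b => if b < n2 then n1 + b else b + n1 + (m1 - n1)
  | PZ i j => m1 + m2 + i * n2 + j
  end.

Definition pidx_dec (x : nat) : pidx :=
  if x < n1 then P1 x else if x < n1 + n2 then P2 (x - n1)
  else if x < m1 + n2 then P1 (x - n2) else if x < m1 + m2 then P2 (x - m1)
  else PZ ((x - (m1 + m2)) %/ n2) ((x - (m1 + m2)) %% n2).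

Definition pidx_valid (d : pidx) : bool :=
  match d with
  | P1 a => a < m1 | P2 b => b < m2 | PZ i j => (i < n1) && (j < n2)
  end.

Definition pidx_gen (d : pidx) : bool :=
  match d with P1 a => a < n1 | P2 b => b < n2 | PZ _ _ => false end.

Definition gen_pair (dx dy dk : pidx) : bool :=
  match dx, dy, dk with
  | P1 a, P2 b, PZ i j => [&& a < n1, b < n2, i == a & j == b]
  | _, _, _ => false
  end.

Definition pidx_lc (dx dy dk : pidx) : F :=
  match dx, dy, dk with
  | P1 a, P1 b, P1 c => lc g1 a b c
  | P2 a, P2 b, P2 c => lc g2 a b c
  | _, _, _ => if gen_pair dx dy dk then 1%R else if gen_pair dy dx dk then (-1)%R else 0%R
  end.

Lemma pidx_enc_lt d : pidx_valid d -> pidx_enc d < m1 + m2 + n1 * n2.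
Proof.
case: d => [a|b|i j] /=; try (case: ifP => ?); try lia.
case/andP => lt_i lt_j; have : i.+1 * n2 <= n1 * n2 by rewrite leq_mul2r lt_i orbT.
rewrite mulSn; lia.
Qed.

Lemma pidx_enc_gen d : pidx_valid d -> (pidx_enc d < n1 + n2) = pidx_gen d.
Proof. by case: d => [a|b|i j] /=; try (case: ifP => ?); lia. Qed.

Lemma pidx_decK x :
  x < m1 + m2 + n1 * n2 -> pidx_valid (pidx_dec x) /\ pidx_enc (pidx_dec x) = x.
Proof.
move=> lt_x; rewrite /pidx_dec.
case: ifP => ?; first by rewrite /= ifT //; lia.
case: ifP => ?; first by rewrite /= ifT; lia.
case: ifP => ?; first by rewrite /= ifF; lia.
case: ifP => ?; first by rewrite /= ifF; lia.
have n2_gt0 : 0 < n2 by case: (posnP n2) => // n2_0; move: lt_x; rewrite n2_0; lia.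
set r := (x - (m1 + m2)).
have lt_r : r < n1 * n2 by rewrite /r; lia.
split => /=; first by rewrite ltn_pmod // andbT ltn_divLR.
by have := divn_eq r n2; rewrite /r; lia.
Qed.

Lemma pidx_encK d : pidx_valid d -> pidx_dec (pidx_enc d) = d.
Proof.
rewrite /pidx_dec; case: d => [a|b|i j] /= valid_d.
- case: (boolP (a < n1)) => lt_a; rewrite ?lt_a ?(negbTE lt_a) //.
  by do 2 (rewrite ifF; last lia); rewrite ifT; [congr P1 | ]; lia.
- case: (boolP (b < n2)) => lt_b; rewrite ?lt_b ?(negbTE lt_b).
    by rewrite ifF; last lia; rewrite ifT; [congr P2 | ]; lia.
  by do 3 (rewrite ifF; last lia); rewrite ifT; [congr P2 | ]; lia.
- case/andP: valid_d => lt_i lt_j.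
  do 4 (rewrite ifF; last lia).
  have -> : (m1 + m2 + i * n2 + j - (m1 + m2) = i * n2 + j) by lia.
  have n2_gt0 : 0 < n2 by lia.
  by rewrite divnMDl // divn_small // addn0 modnMDl modn_small.
Qed.

Lemma pidx_enc_inj d d' :
  pidx_valid d -> pidx_valid d' -> pidx_enc d = pidx_enc d' -> d = d'.
Proof. by move=> vd vd' e; rewrite -(pidx_encK vd) -(pidx_encK vd') e. Qed.

Lemma in1_enc d :
  pidx_valid d -> in1 g1 g2 (pidx_enc d) = (if d is P1 _ then true else false).
Proof. by rewrite /in1; case: d => [a|b|i j] /=; try case: ifP; lia. Qed.

Lemma in2_enc d :
  pidx_valid d -> in2 g1 g2 (pidx_enc d) = (if d is P2 _ then true else false).
Proof. by rewrite /in2; case: d => [a|b|i j] /=; try case: ifP; lia. Qed.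

Lemma inv1_enc a : a < m1 -> inv1 g1 g2 (pidx_enc (P1 a)) = a.
Proof.
by rewrite /inv1 /= => lt_a; case: (boolP (a < n1)) => lt_a';
  rewrite ?lt_a' ?(negbTE lt_a') // ifF; lia.
Qed.

Lemma inv2_enc b : b < m2 -> inv2 g1 g2 (pidx_enc (P2 b)) = b.
Proof.
by rewrite /inv2 /= => lt_b; case: (boolP (b < n2)) => lt_b';
  rewrite ?lt_b' ?(negbTE lt_b'); [rewrite ifT | rewrite ifF]; lia.
Qed.

Lemma isgen1_enc d :
  pidx_valid d -> isgen1 g1 (pidx_enc d) = (if d is P1 a then a < n1 else false).
Proof. by rewrite /isgen1; case: d => [a|b|i j] /=; try case: ifP; lia. Qed.

Lemma isgen2_enc d :
  pidx_valid d -> isgen2 g1 g2 (pidx_enc d) = (if d is P2 b then b < n2 else false).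
Proof. by rewrite /isgen2; case: d => [a|b|i j] /=; try case: ifP; lia. Qed.

Lemma zidx_enc i j : zidx g1 g2 i j = pidx_enc (PZ i j).
Proof. by rewrite /zidx /=; lia. Qed.

Lemma gen_pair_enc dx dy dk : pidx_valid dx -> pidx_valid dy -> pidx_valid dk ->
  [&& isgen1 g1 (pidx_enc dx), isgen2 g1 g2 (pidx_enc dy) &
      pidx_enc dk == zidx g1 g2 (pidx_enc dx) (pidx_enc dy - n1)] = gen_pair dx dy dk.
Proof.
move=> vx vy vk; rewrite (isgen1_enc vx) (isgen2_enc vy).
case: dx vx => [a|a|a a'] va //=; case: dy vy => [b|b|b b'] vb //=; rewrite ?andbF //.
case: (boolP (a < n1)) => lt_a //=; case: (boolP (b < n2)) => lt_b //=;
  rewrite ?andbF //; try by case: dk vk.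
have vz : pidx_valid (PZ a b) by rewrite /= lt_a lt_b.
rewrite (_ : n1 + b - n1 = b) ?zidx_enc; last lia.
apply/eqP/idP => [/(pidx_enc_inj vk vz) -> | ]; first by rewrite !eqxx.
by case: dk vk => // i j _ /andP[/eqP-> /eqP->].
Qed.

Lemma prod_lc_enc dx dy dk : pidx_valid dx -> pidx_valid dy -> pidx_valid dk ->
  prod_lc g1 g2 (pidx_enc dx) (pidx_enc dy) (pidx_enc dk) = pidx_lc dx dy dk.
Proof.
move=> vx vy vk; rewrite /prod_lc (in1_enc vx) (in1_enc vy) (in1_enc vk)
  (in2_enc vx) (in2_enc vy) (in2_enc vk) (gen_pair_enc vx vy vk) (gen_pair_enc vy vx vk).
by case: dx vx => [a|a|a a'] vx; case: dy vy => [b|b|b b'] vy;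
  case: dk vk => [c|c|c c'] vk //=; rewrite ?inv1_enc ?inv2_enc.
Qed.

End ProductIndex.

Section MonomialIso.
Variable F : fieldType.
Implicit Types g h : lie F.
Local Open Scope ring_scope.

Lemma lie_iso_monomial g h (f : 'I_(ldim g) -> 'I_(ldim h)) (s : 'I_(ldim g) -> F) :
  bijective f -> (forall i, s i != 0) ->
  (forall i j k : 'I_(ldim g), s k * lc g i j k = s i * s j * lc h (f i) (f j) (f k)) ->
  lie_iso g h.
Proof.
move=> [f' fK f'K] s_neq0 lc_f; have f_inj := can_inj fK.
pose A := \matrix_(i, j) (if f i == j then s i else 0).
have A_f u i : (u *m A) 0 (f i) = u 0 i * s i.
  rewrite mxE (bigD1 i) //= big1 ?addr0 => [|j ne_ji]; first by rewrite mxE eqxx.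
  by rewrite mxE (inj_eq f_inj) (negbTE ne_ji) mulr0.
have A_free : row_free A.
  apply/row_freeP; exists (\matrix_(j, i) (if f i == j then (s i)^-1 else 0)).
  apply/matrixP => i i'; rewrite !mxE (bigD1 (f i)) //= big1 ?addr0 => [|j ne_j].
    rewrite !mxE eqxx (inj_eq f_inj) eq_sym.
    by case: eqP => [->|_]; rewrite ?mulr0 ?divff.
  by rewrite [A i j]mxE (eq_sym (f i)) (negbTE ne_j) mul0r.
have dim_gh : ldim g = ldim h.
  by rewrite -[LHS]card_ord -[RHS]card_ord; apply: bij_eq_card; exists f'.
exists A; split => // [|u v].
  by move: A_free; rewrite /row_free /row_full => /eqP->; rewrite dim_gh.
apply/rowP => j; rewrite -(f'K j) A_f !mxE.
rewrite (reindex f) /=; last by exists f' => ? _.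
rewrite mulr_suml; apply: eq_bigr => i _.
rewrite (reindex f) /=; last by exists f' => ? _.
rewrite mulr_suml; apply: eq_bigr => i' _.
rewrite !A_f; transitivity (u 0 i * v 0 i' * (s (f' j) * lc g i i' (f' j))); first ring.
by rewrite lc_f; ring.
Qed.

Lemma lie_iso_index_map g h (sg : nat -> nat) (s : nat -> F) :
  ldim g = ldim h ->
  (forall x, (x < ldim g)%N -> (sg x < ldim h)%N) ->
  (forall x y, (x < ldim g)%N -> (y < ldim g)%N -> sg x = sg y -> x = y) ->
  (forall x, (x < ldim g)%N -> s x != 0) ->
  (forall i j k, (i < ldim g)%N -> (j < ldim g)%N -> (k < ldim g)%N ->
     s k * lc g i j k = s i * s j * lc h (sg i) (sg j) (sg k)) ->
  lie_iso g h.
Proof.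
move=> dim_gh sg_lt sg_inj s_neq0 sg_lc.
pose f (i : 'I_(ldim g)) : 'I_(ldim h) := Ordinal (sg_lt i (ltn_ord i)).
apply: (@lie_iso_monomial g h f (fun i => s i)) => [|i|i j k]; [|exact: s_neq0|exact: sg_lc].
apply: inj_card_bij; last by rewrite !card_ord dim_gh.
by move=> i j /(congr1 val) /sg_inj eq_ij; apply: val_inj; apply: eq_ij.
Qed.

End MonomialIso.

Arguments pidx_enc : simpl never.

Ltac case_ifs := repeat match goal with |- context [if ?b then _ else _] =>
  lazymatch b with context [if _ then _ else _] => fail | _ =>
    let E := fresh "E" in destruct b eqn:E end end.

Ltac solve_ifs := case_ifs; try ring; exfalso; lia.

Section Commutativity.
Variable F : fieldType.
Variables A B : lie F.
Hypothesis nA_le_mA : lgen A <= ldim A.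
Hypothesis nB_le_mB : lgen B <= ldim B.

Definition pidx_swap (d : pidx) : pidx :=
  match d with P1 a => P2 a | P2 b => P1 b | PZ i j => PZ j i end.

Lemma pidx_swapK : involutive pidx_swap. Proof. by case. Qed.

Lemma pidx_swap_valid d : pidx_valid A B d -> pidx_valid B A (pidx_swap d).
Proof. by case: d => //= i j; rewrite andbC. Qed.

(* Z_ij goes to -Z'_ji, since [X_i, X'_j] = - [X'_j, X_i]. *)
Lemma lie_iso_lprodC : lie_iso (lprod A B) (lprod B A).
Proof.
apply: (@lie_iso_index_map _ _ _ (fun x => pidx_enc B A (pidx_swap (pidx_dec A B x)))
  (fun x => if pidx_dec A B x is PZ _ _ then (-1)%R else 1%R)) => /=; first lia.
- move=> x lt_x; have [vx _] := pidx_decK nA_le_mA nB_le_mB lt_x.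
  by apply: pidx_enc_lt; rewrite ?pidx_swap_valid.
- move=> x y lt_x lt_y.
  have [vx ex] := pidx_decK nA_le_mA nB_le_mB lt_x.
  have [vy ey] := pidx_decK nA_le_mA nB_le_mB lt_y.
  move/(pidx_enc_inj nB_le_mB nA_le_mA (pidx_swap_valid vx) (pidx_swap_valid vy)).
  by move/(can_inj pidx_swapK) => exy; rewrite -ex -ey exy.
- by move=> x _; case: (pidx_dec A B x); rewrite ?oppr_eq0 oner_eq0.
move=> i j k lt_i lt_j lt_k.
have [vi ei] := pidx_decK nA_le_mA nB_le_mB lt_i.
have [vj ej] := pidx_decK nA_le_mA nB_le_mB lt_j.
have [vk ek] := pidx_decK nA_le_mA nB_le_mB lt_k.
rewrite -[X in prod_lc _ _ X _ _]ei -[X in prod_lc _ _ _ X _]ej -[X in prod_lc _ _ _ _ X]ek.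
rewrite !prod_lc_enc ?pidx_swap_valid //.
move: vi vj vk.
case: (pidx_dec A B i) => [a|a|a a']; case: (pidx_dec A B j) => [b|b|b b'];
  case: (pidx_dec A B k) => [c|c|c c'] /= vi vj vk; solve_ifs.
Qed.

End Commutativity.

Section Relabeling.
Variable F : fieldType.
Implicit Types g h : lie F.

Definition relabeling_by (sg : nat -> nat) g h : Prop :=
  [/\ ldim g = ldim h /\ lgen g = lgen h,
   forall x, x < ldim g -> sg x < ldim g,
   forall x y, x < ldim g -> y < ldim g -> sg x = sg y -> x = y,
   forall x, x < ldim g -> (sg x < lgen g) = (x < lgen g) &
   forall i j k, i < ldim g -> j < ldim g -> k < ldim g ->
     lc g i j k = lc h (sg i) (sg j) (sg k)].

Definition relabeling g h : Prop := exists sg, relabeling_by sg g h.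

Lemma relabeling_lie_iso g h : relabeling g h -> lie_iso g h.
Proof.
case=> sg [[dim_gh _] sg_lt sg_inj _ sg_lc].
apply: (@lie_iso_index_map _ _ _ sg (fun _ => 1%R)) => // [x lt_x|x _|i j k *].
- by rewrite -dim_gh sg_lt.
- exact: oner_neq0.
- by rewrite !mul1r sg_lc.
Qed.

Lemma relabeling_refl g : relabeling g g.
Proof. by exists id; split. Qed.

Lemma relabeling_trans g h l : relabeling g h -> relabeling h l -> relabeling g l.
Proof.
case=> s1 [[dim1 gen1] lt1 inj1 isgen1 lc1]; case=> s2 [[dim2 gen2] lt2 inj2 isgen2 lc2].
have lt1' x : x < ldim g -> s1 x < ldim h by rewrite -dim1; apply: lt1.
exists (s2 \o s1); split => /=.
- by rewrite dim1 gen1.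
- by move=> x /lt1' /lt2; rewrite dim1.
- by move=> x y lt_x lt_y /(inj2 _ _ (lt1' x lt_x) (lt1' y lt_y)); apply: inj1.
- by move=> x lt_x; rewrite gen1 isgen2 ?lt1' // -gen1 isgen1.
- by move=> i j k lt_i lt_j lt_k; rewrite lc1 // lc2 ?lt1'.
Qed.

Lemma relabeling_of_coding (I : Type) g h (valid : I -> bool)
    (enc_g enc_h : I -> nat) (dec_g : nat -> I) :
  ldim g = ldim h -> lgen g = lgen h ->
  (forall x, x < ldim g -> valid (dec_g x) /\ enc_g (dec_g x) = x) ->
  (forall d, valid d -> enc_h d < ldim h) ->
  (forall d d', valid d -> valid d' -> enc_h d = enc_h d' -> d = d') ->
  (forall d, valid d -> (enc_h d < lgen h) = (enc_g d < lgen g)) ->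
  (forall dx dy dk, valid dx -> valid dy -> valid dk ->
     lc g (enc_g dx) (enc_g dy) (enc_g dk) = lc h (enc_h dx) (enc_h dy) (enc_h dk)) ->
  relabeling g h.
Proof.
move=> dim_gh gen_gh decK enc_h_lt enc_h_inj enc_h_gen enc_lc.
exists (enc_h \o dec_g); split => //=.
- by move=> x /decK[valid_x _]; rewrite dim_gh enc_h_lt.
- move=> x y /decK[vx ex] /decK[vy ey] /(enc_h_inj _ _ vx vy) exy.
  by rewrite -ex -ey exy.
- by move=> x /decK[vx ex]; rewrite [in LHS]gen_gh enc_h_gen // ex.
- move=> i j k /decK[vi ei] /decK[vj ej] /decK[vk ek].
  by rewrite -[in LHS]ei -[in LHS]ej -[in LHS]ek enc_lc.
Qed.

End Relabeling.

Section RelabelingLprodl.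
Variable F : fieldType.
Variables (A A' C : lie F) (sg : nat -> nat).
Hypothesis nA_le_mA : lgen A <= ldim A.
Hypothesis nC_le_mC : lgen C <= ldim C.
Hypothesis sg_rel : relabeling_by sg A A'.

Let nA'_le_mA' : lgen A' <= ldim A'.
Proof. by case: sg_rel => -[<- <-]. Qed.

Definition pidx_relabel (d : pidx) : pidx :=
  match d with P1 a => P1 (sg a) | P2 c => P2 c | PZ i j => PZ (sg i) j end.

Lemma pidx_relabel_valid d : pidx_valid A C d -> pidx_valid A' C (pidx_relabel d).
Proof.
case: sg_rel => -[dimA genA] sg_lt _ sg_gen _.
case: d => [a|c|i j] //=; first by rewrite -dimA; apply: sg_lt.
by case/andP => lt_i ->; rewrite -genA sg_gen ?lt_i //; lia.
Qed.

Lemma pidx_relabel_inj d d' : pidx_valid A C d -> pidx_valid A C d' ->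
  pidx_relabel d = pidx_relabel d' -> d = d'.
Proof.
case: sg_rel => _ _ sg_inj _ _.
case: d d' => [a|c|i j] [a'|c'|i' j'] //= vd vd' [].
- by move/sg_inj => ->.
- case/andP: vd => lt_i _; case/andP: vd' => lt_i' _ e_sg ->.
  by rewrite (sg_inj i i') //; lia.
Qed.

Lemma pidx_relabel_gen d :
  pidx_valid A C d -> pidx_gen A' C (pidx_relabel d) = pidx_gen A C d.
Proof.
by case: sg_rel => -[_ genA] _ _ sg_gen _; case: d => //= a; rewrite -genA; apply: sg_gen.
Qed.

Lemma pidx_relabel_lc dx dy dk :
  pidx_valid A C dx -> pidx_valid A C dy -> pidx_valid A C dk ->
  pidx_lc A C dx dy dk
  = pidx_lc A' C (pidx_relabel dx) (pidx_relabel dy) (pidx_relabel dk).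
Proof.
case: sg_rel => -[_ genA] _ sg_inj sg_gen sg_lc.
have sg_eq a b : a < ldim A -> b < ldim A -> (sg a == sg b) = (a == b).
  by move=> lt_a lt_b; apply/eqP/eqP => [/sg_inj|->]; [apply|].
case: dx => [a|a|a a'] /= vx; case: dy => [b|b|b b'] /= vy;
  case: dk => [c|c|c c'] /= vk //; first exact: sg_lc.
all: case/andP: vk => lt_c _; rewrite -genA sg_gen // sg_eq //; lia.
Qed.

Lemma relabeling_lprodl : relabeling (lprod A C) (lprod A' C).
Proof.
case: (sg_rel) => -[dimA genA] _ _ _ _.
apply: (@relabeling_of_coding _ _ _ _ (pidx_valid A C) (pidx_enc A C)
  (fun d => pidx_enc A' C (pidx_relabel d)) (pidx_dec A C)) => /=.
- by rewrite dimA genA.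
- by rewrite genA.
- exact: pidx_decK.
- by move=> d /pidx_relabel_valid; apply: pidx_enc_lt.
- move=> d d' vd vd' /(pidx_enc_inj nA'_le_mA' nC_le_mC).
  by move/(_ (pidx_relabel_valid vd) (pidx_relabel_valid vd'))/pidx_relabel_inj; apply.
- move=> d vd; rewrite pidx_enc_gen ?pidx_relabel_valid // pidx_relabel_gen //.
  by rewrite pidx_enc_gen.
- move=> dx dy dk vx vy vk.
  by rewrite !prod_lc_enc ?pidx_relabel_valid // pidx_relabel_lc.
Qed.

End RelabelingLprodl.

(* Common index set for the bases of (A x B) x C and A x (B x C): the generators
   of a product being those of its factors, each has a Z for every pair of
   generators from two different factors among A, B, C. *)
Inductive tidx := TA of nat | TB of nat | TC of nat
  | ZAB of nat & nat | ZAC of nat & nat | ZBC of nat & nat.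

Section Associativity.
Variable F : fieldType.
Variables A B C : lie F.
Hypothesis nA_le_mA : lgen A <= ldim A.
Hypothesis nB_le_mB : lgen B <= ldim B.
Hypothesis nC_le_mC : lgen C <= ldim C.
Local Notation AB := (lprod A B).
Local Notation BC := (lprod B C).
Local Notation nA := (lgen A). Local Notation nB := (lgen B).
Local Notation nC := (lgen C).
Local Notation mA := (ldim A). Local Notation mB := (ldim B).
Local Notation mC := (ldim C).

Let nAB_le_mAB : lgen AB <= ldim AB. Proof. by rewrite /=; lia. Qed.
Let nBC_le_mBC : lgen BC <= ldim BC. Proof. by rewrite /=; lia. Qed.

Definition tidx_valid (d : tidx) : bool :=
  match d with
  | TA a => a < mA | TB b => b < mB | TC c => c < mC
  | ZAB i j => (i < nA) && (j < nB)
  | ZAC i k => (i < nA) && (k < nC)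
  | ZBC j k => (j < nB) && (k < nC)
  end.

Definition tidx_gen (d : tidx) : bool :=
  match d with
  | TA a => a < nA | TB b => b < nB | TC c => c < nC | _ => false
  end.

Definition gen_pair3 (dx dy dk : tidx) : bool :=
  match dx, dy, dk with
  | TA a, TB b, ZAB i j => [&& a < nA, b < nB, i == a & j == b]
  | TA a, TC c, ZAC i k => [&& a < nA, c < nC, i == a & k == c]
  | TB b, TC c, ZBC j k => [&& b < nB, c < nC, j == b & k == c]
  | _, _, _ => false
  end.

Definition tidx_lc (dx dy dk : tidx) : F :=
  match dx, dy, dk with
  | TA a, TA b, TA c => lc A a b c
  | TB a, TB b, TB c => lc B a b c
  | TC a, TC b, TC c => lc C a b c
  | _, _, _ => if gen_pair3 dx dy dk then 1%R else if gen_pair3 dy dx dk then (-1)%R else 0%R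
  end.

(* The j-th generator of B is the generator number nA + j of A x B. *)
Definition lassoc_pidx (d : tidx) : pidx :=
  match d with
  | TA a => P1 (pidx_enc A B (P1 a)) | TB b => P1 (pidx_enc A B (P2 b)) | TC c => P2 c
  | ZAB i j => P1 (pidx_enc A B (PZ i j)) | ZAC i k => PZ i k | ZBC j k => PZ (nA + j) k
  end.

Definition lassoc_enc (d : tidx) : nat := pidx_enc AB C (lassoc_pidx d).

Definition lassoc_dec (x : nat) : tidx :=
  match pidx_dec AB C x with
  | P1 u => match pidx_dec A B u with P1 a => TA a | P2 b => TB b | PZ i j => ZAB i j end
  | P2 c => TC c
  | PZ i k => if i < nA then ZAC i k else ZBC (i - nA) k
  end.

Definition rassoc_pidx (d : tidx) : pidx :=
  match d with
  | TA a => P1 a | TB b => P2 (pidx_enc B C (P1 b)) | TC c => P2 (pidx_enc B C (P2 c))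
  | ZAB i j => PZ i j | ZAC i k => PZ i (nB + k) | ZBC j k => P2 (pidx_enc B C (PZ j k))
  end.

Definition rassoc_enc (d : tidx) : nat := pidx_enc A BC (rassoc_pidx d).

Definition rassoc_dec (x : nat) : tidx :=
  match pidx_dec A BC x with
  | P1 a => TA a
  | P2 v => match pidx_dec B C v with P1 b => TB b | P2 c => TC c | PZ j k => ZBC j k end
  | PZ i w => if w < nB then ZAB i w else ZAC i (w - nB)
  end.

Lemma lassoc_pidx_valid d : tidx_valid d -> pidx_valid AB C (lassoc_pidx d).
Proof. by case: d => [a|b|c|i j|i k|j k] /= vd; try (apply: pidx_enc_lt => //); lia. Qed.

Lemma rassoc_pidx_valid d : tidx_valid d -> pidx_valid A BC (rassoc_pidx d).
Proof. by case: d => [a|b|c|i j|i k|j k] /= vd; try (apply: pidx_enc_lt => //); lia. Qed.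

Lemma lassoc_decK x :
  x < ldim (lprod AB C) -> tidx_valid (lassoc_dec x) /\ lassoc_enc (lassoc_dec x) = x.
Proof.
move=> lt_x; have [vx ex] := pidx_decK nAB_le_mAB nC_le_mC lt_x.
rewrite /lassoc_dec /lassoc_enc; move: vx ex; case: (pidx_dec AB C x) => [u|c|i k] /= vx ex.
- have [vu eu] := pidx_decK nA_le_mA nB_le_mB vx.
  by move: vu eu; case: (pidx_dec A B u) => [a|b|i j] /= vu ->.
- by [].
- case: ifP => lt_i /=; first by case/andP: vx => _ ->; rewrite lt_i.
  by rewrite subnKC; last lia; case/andP: vx => ? ->; split => //; lia.
Qed.

Lemma rassoc_encK d : tidx_valid d -> rassoc_dec (rassoc_enc d) = d.
Proof.
move=> vd; rewrite /rassoc_dec /rassoc_enc pidx_encK ?rassoc_pidx_valid //.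
case: d vd => [a|b|c|i j|i k|j k] //= vd; rewrite ?pidx_encK //=.
- by case/andP: vd => _ ->.
- by rewrite ifF; [congr ZAC|]; lia.
Qed.

Lemma rassoc_enc_lt d : tidx_valid d -> rassoc_enc d < ldim (lprod A BC).
Proof. by move=> vd; apply: pidx_enc_lt; rewrite ?rassoc_pidx_valid. Qed.

Lemma lassoc_enc_gen d : tidx_valid d -> (lassoc_enc d < lgen (lprod AB C)) = tidx_gen d.
Proof.
move=> vd; rewrite /lassoc_enc pidx_enc_gen ?lassoc_pidx_valid //.
by case: d vd => [a|b|c|i j|i k|j k] //= vd; rewrite ?pidx_enc_gen.
Qed.

Lemma rassoc_enc_gen d : tidx_valid d -> (rassoc_enc d < lgen (lprod A BC)) = tidx_gen d.
Proof.
move=> vd; rewrite /rassoc_enc pidx_enc_gen ?rassoc_pidx_valid //.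
by case: d vd => [a|b|c|i j|i k|j k] //= vd; rewrite ?pidx_enc_gen.
Qed.

Lemma lc_lassoc_enc dx dy dk : tidx_valid dx -> tidx_valid dy -> tidx_valid dk ->
  lc (lprod AB C) (lassoc_enc dx) (lassoc_enc dy) (lassoc_enc dk) = tidx_lc dx dy dk.
Proof.
move=> vx vy vk; rewrite /= prod_lc_enc ?lassoc_pidx_valid //.
move: vx vy vk; case: dx => [a|a|a|a a'|a a'|a a'];
  case: dy => [b|b|b|b b'|b b'|b b']; case: dk => [c|c|c|c c'|c c'|c c'] /= vx vy vk;
  rewrite /= ?prod_lc_enc //= /pidx_enc /=; solve_ifs.
Qed.

Lemma lc_rassoc_enc dx dy dk : tidx_valid dx -> tidx_valid dy -> tidx_valid dk ->
  lc (lprod A BC) (rassoc_enc dx) (rassoc_enc dy) (rassoc_enc dk) = tidx_lc dx dy dk.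
Proof.
move=> vx vy vk; rewrite /= prod_lc_enc ?rassoc_pidx_valid //.
move: vx vy vk; case: dx => [a|a|a|a a'|a a'|a a'];
  case: dy => [b|b|b|b b'|b b'|b b']; case: dk => [c|c|c|c c'|c c'|c c'] /= vx vy vk;
  rewrite /= ?prod_lc_enc //= /pidx_enc /=; solve_ifs.
Qed.

Lemma relabeling_lprodA : relabeling (lprod AB C) (lprod A BC).
Proof.
apply: (@relabeling_of_coding _ _ _ _ tidx_valid lassoc_enc rassoc_enc lassoc_dec).
- by rewrite /= !mulnDl !mulnDr; lia.
- by rewrite /= addnA.
- exact: lassoc_decK.
- exact: rassoc_enc_lt.
- by move=> d d' vd vd' /(congr1 rassoc_dec); rewrite !rassoc_encK.
- by move=> d vd; rewrite rassoc_enc_gen // lassoc_enc_gen.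
- by move=> dx dy dk vx vy vk; rewrite lc_lassoc_enc // lc_rassoc_enc.
Qed.

End Associativity.

Section IteratedProducts.
Variable F : fieldType.
Variable g : nat -> lie F.

Lemma iprodS a k : iprod g a k.+1 = lprod (iprod g a k) (g (a.+1 + k)).
Proof. by rewrite /iprod -[k.+1]addn1 iotaD foldl_cat. Qed.

Lemma lgen_le_ldim_lprod (A B : lie F) :
  lgen A <= ldim A -> lgen B <= ldim B -> lgen (lprod A B) <= ldim (lprod A B).
Proof. by rewrite /=; lia. Qed.

Lemma lgen_le_ldim_iprod a k :
  (forall i, a <= i <= a + k -> lgen (g i) <= ldim (g i)) ->
  lgen (iprod g a k) <= ldim (iprod g a k).
Proof.
elim: k => [|k IHk] gens; first by apply: gens; rewrite addn0 leqnn.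
by rewrite iprodS; apply: lgen_le_ldim_lprod; [apply: IHk => i ? | ]; apply: gens; lia.
Qed.

Lemma relabeling_iprodA a k :
  (forall i, a <= i <= a + k.+1 -> lgen (g i) <= ldim (g i)) ->
  relabeling (lprod (iprod g a k) (g (a.+1 + k))) (lprod (g a) (iprod g a.+1 k)).
Proof.
elim: k => [|k IHk] gens; first by rewrite addn0; apply: relabeling_refl.
have gens_iprod b l : a <= b -> b + l <= a + k.+2 ->
    lgen (iprod g b l) <= ldim (iprod g b l).
  by move=> *; apply: lgen_le_ldim_iprod => i ?; apply: gens; lia.
have [sg sg_rel] : relabeling (lprod (iprod g a k) (g (a.+1 + k)))
                              (lprod (g a) (iprod g a.+1 k)).
  by apply: IHk => i ?; apply: gens; lia.
apply: (@relabeling_trans _ _ (lprod (lprod (g a) (iprod g a.+1 k)) (g (a.+1 + k.+1)))).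
  rewrite iprodS; apply: (relabeling_lprodl _ _ sg_rel).
    by rewrite -iprodS gens_iprod //; lia.
  by apply: gens; lia.
rewrite iprodS -addSnnS.
by apply: relabeling_lprodA; [apply: gens | apply: gens_iprod | apply: gens]; lia.
Qed.

End IteratedProducts.

Unset Implicit Arguments.
Local Open Scope ring_scope.

Theorem mainTheorem5 (R : realType) (t : nat) (g : nat -> lie R[i]) :
  (2 <= t)%N ->
  (forall i, (1 <= i <= t)%N -> good (g i)) ->
  lie_iso (lprod (g 1%N) (g 2%N)) (lprod (g 2%N) (g 1%N)) /\
  lie_iso (lprod (iprod g 1 (t - 2)) (g t))
          (lprod (g 1%N) (iprod g 2 (t - 2))).
Proof.
move=> le2t good_g.
have gens i : (1 <= i <= t)%N -> (lgen (g i) <= ldim (g i))%N.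
  by move/good_g => [_ _ _ []].
split; first by apply: lie_iso_lprodC; apply: gens; lia.
apply: relabeling_lie_iso; rewrite -{2}(subnKC le2t).
by apply: relabeling_iprodA => i ?; apply: gens; lia.
Qed.
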